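(* Let $n\ge1$ and $a'_\ell=\mathrm{cmr}(a_\ell)$ for $\ell=1,\dots,n$. Then in the plactic monoid $\mathcal A_n^*/{\equiv_{\mathrm{knu}}}$: $a'_p\,a'_r\,a'_q\equiv_{\mathrm{knu}}a'_r\,a'_p\,a'_q$ whenever $1\le p\le q<r\le n$, and $a'_q\,a'_p\,a'_r\equiv_{\mathrm{knu}}a'_q\,a'_r\,a'_p$ whenever $1\le p<q\le r\le n$. Consequently, for all $u,v\in\mathcal A_n^*$, $u\equiv_{\mathrm{knu}}v$ implies $\mathrm{cmr}(u)\equiv_{\mathrm{knu}}\mathrm{cmr}(v)$.
   Context: $\mathcal A_n=\{a_1<\cdots<a_n\}$. The co-mirror of a letter is $\mathrm{cmr}(a_\ell)=a_na_{n-1}\cdots a_1$ with the letter $a_{n-\ell+1}$ omitted (a word of length $n-1$), extended to words by $\mathrm{cmr}(a_{\ell_1}\cdots a_{\ell_m})=\mathrm{cmr}(a_{\ell_1})\cdots\mathrm{cmr}(a_{\ell_m})$. $\equiv_{\mathrm{knu}}$ is the congruence on $\mathcal A_n^*$ generated by $xzy=zxy$ ($x\le y<z$) and $yxz=yzx$ ($x<y\le z$) for letters $x,y,z$. *)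

From mathcomp Require Import all_boot all_order.
Set Implicit Arguments. Unset Strict Implicit. Unset Printing Implicit Defensive.

(* The alphabet A_n = {a_1 < ... < a_n} is modelled by 'I_n, with a_l
   represented by the ordinal l-1 (order preserved). Words are seq 'I_n. *)

Inductive knuth_rel {n : nat} : seq 'I_n -> seq 'I_n -> Prop :=
| knuth1 (x y z : 'I_n) : x <= y -> y < z -> knuth_rel [:: x; z; y] [:: z; x; y]
| knuth2 (x y z : 'I_n) : x < y -> y <= z -> knuth_rel [:: y; x; z] [:: y; z; x].

Inductive knu_equiv {n : nat} : seq 'I_n -> seq 'I_n -> Prop :=
| knu_refl u : knu_equiv u u
| knu_step u v l r : knuth_rel l r -> knu_equiv (u ++ l ++ v) (u ++ r ++ v)
| knu_sym u v : knu_equiv u v -> knu_equiv v u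
| knu_trans u v w : knu_equiv u v -> knu_equiv v w -> knu_equiv u w.

(* Co-mirror of a letter: a_n a_{n-1} ... a_1 with a_{n-l+1} omitted.
   For i = l-1, the omitted letter a_{n-l+1} is the ordinal n-l = rev_ord i. *)
Definition cmr_letter {n : nat} (i : 'I_n) : seq 'I_n :=
  [seq j <- rev (enum 'I_n) | j != rev_ord i].

Definition cmr {n : nat} (w : seq 'I_n) : seq 'I_n := flatten (map cmr_letter w).

From mathcomp Require Import all_boot zify.
Set Implicit Arguments. Unset Strict Implicit. Unset Printing Implicit Defensive.

(* Read the letter a_l as n - l. Then each co-mirror cmr(a_l) is a column, i.e.
   a strictly decreasing word, of length n - 1. Two plactic facts drive the
   proof: a column commutes with every word whose letters it contains, since
   such a letter can be slid through the column by the two Knuth relations; and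
   the letter m followed by the column missing m is equivalent to the column
   missing m + 1 followed by m + 1. Consequently the product of the columns
   missing x < y is equivalent to the full column, which is central, followed
   by the column missing both x and y. Both Knuth relations between co-mirrors
   thereby reduce to exchanging missing letters between a column with two gaps
   and a column with one gap; the last claim holds because cmr is a monoid
   morphism. *)

(* Letters are plain numbers here, which makes interval arithmetic on them easy;
   [plactic_knu_equiv] transports the congruence back to ['I_n]. *)
Inductive knuth_nat : seq nat -> seq nat -> Prop :=
| knuth_nat1 x y z : x <= y -> y < z -> knuth_nat [:: x; z; y] [:: z; x; y]
| knuth_nat2 x y z : x < y -> y <= z -> knuth_nat [:: y; x; z] [:: y; z; x].

Inductive plactic : seq nat -> seq nat -> Prop :=
| plactic_refl u : plactic u u
| plactic_step u v l r : knuth_nat l r -> plactic (u ++ l ++ v) (u ++ r ++ v)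
| plactic_sym u v : plactic u v -> plactic v u
| plactic_trans u v w : plactic u v -> plactic v w -> plactic u w.

Local Infix "≡" := plactic (at level 70).

Lemma plactic_cat u v a b : a ≡ b -> u ++ a ++ v ≡ u ++ b ++ v.
Proof.
elim=> {a b} [a|u0 v0 l r lr|a b _ IH|a b c _ IHab _ IHbc].
- exact: plactic_refl.
- by move: (plactic_step (u ++ u0) (v0 ++ v) lr); rewrite -!catA.
- exact: plactic_sym.
- exact: plactic_trans IHbc.
Qed.

Lemma plactic_catl u a b : a ≡ b -> u ++ a ≡ u ++ b.
Proof. by move=> ab; have := plactic_cat u [::] ab; rewrite !cats0. Qed.

Lemma plactic_catr v a b : a ≡ b -> a ++ v ≡ b ++ v.
Proof. exact: plactic_cat [::] v a b. Qed.

Lemma plactic_perm u v : u ≡ v -> perm_eq u v.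
Proof.
elim=> {u v} [u|u v l r lr|u v _ IH|u v w _ IHuv _ IHvw].
- exact: perm_refl.
- rewrite perm_cat2l perm_cat2r.
  by case: lr => x y z _ _; apply/permP => p /=; lia.
- by rewrite perm_sym.
- exact: perm_trans IHvw.
Qed.

Lemma gtn_trans : transitive gtn. Proof. exact: rev_trans ltn_trans. Qed.

Lemma column_slide_left U x y t : sorted gtn (rcons U y) -> x <= y ->
  x :: U ++ y :: t ≡ U ++ x :: y :: t.
Proof.
elim: U => [|z U IH] /= colU xy; first exact: plactic_refl.
have colU' := path_sorted colU.
apply: plactic_trans (plactic_catl [:: z] (IH colU' xy)).
have zh : head y U < z.
  by case: U colU {IH colU'} => [|h U] /= /andP[].
have xh : x <= head y U.
  case: U colU' {IH colU zh} => //= h U colU'.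
  have := order_path_min gtn_trans colU' => /allP /(_ y).
  by rewrite mem_rcons mem_head => /(_ isT) /ltnW /(leq_trans xy).
case: U zh xh {IH colU colU'} => [|h U] /= zh xh;
  exact: (plactic_step [::] _ (knuth_nat1 xh zh)).
Qed.

Lemma column_slide_right L u w : sorted gtn (u :: L) -> u <= w ->
  u :: w :: L ≡ u :: rcons L w.
Proof.
elim: L u => [|l L IH] u /= colL uw; first exact: plactic_refl.
case/andP: colL => lu colL.
apply: plactic_trans (plactic_catl [:: u] (IH l colL (ltnW (leq_trans lu uw)))).
exact: plactic_sym (plactic_step [::] L (knuth_nat2 lu uw)).
Qed.

(* Slide x leftwards through the column down to its copy, then rightwards out. *)
Lemma column_commute_letter c x : sorted gtn c -> x \in c -> x :: c ≡ rcons c x.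
Proof.
move=> + xc; case/splitPr: xc => U L; rewrite sorted_cat_cons => /andP[colU colL].
apply: plactic_trans (column_slide_left L colU (leqnn x)) _.
by rewrite -cats1 -catA cats1; apply/plactic_catl/column_slide_right.
Qed.

Lemma column_commute c w : sorted gtn c -> all (mem c) w -> w ++ c ≡ c ++ w.
Proof.
move=> colc; elim: w => [|x w IH] /=; first by rewrite cats0 => _; exact: plactic_refl.
case/andP=> xc wc.
apply: plactic_trans (plactic_catl [:: x] (IH wc)) _.
by have := plactic_catr w (column_commute_letter colc xc); rewrite -cats1 -catA.
Qed.

Lemma column_commute_cat c w v : sorted gtn c -> all (mem c) w ->
  w ++ c ++ v ≡ c ++ w ++ v.
Proof. by move=> colc wc; have := plactic_catr v (column_commute colc wc); rewrite -!catA. Qed.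

Definition col lo hi := rev (iota lo (hi - lo)).

Lemma col_split lo mid hi : lo <= mid <= hi -> col lo hi = col mid hi ++ col lo mid.
Proof.
move=> /andP[lo_mid mid_hi]; rewrite /col.
have -> : hi - lo = (mid - lo) + (hi - mid) by lia.
by rewrite iotaD rev_cat subnKC.
Qed.

Lemma col_nil a : col a a = [::].
Proof. by rewrite /col subnn. Qed.

Lemma col1 a : col a a.+1 = [:: a].
Proof. by rewrite /col subSnn. Qed.

Lemma col_cons lo hi : lo <= hi -> col lo hi.+1 = hi :: col lo hi.
Proof. by move=> lo_hi; rewrite (@col_split lo hi) ?lo_hi //= col1. Qed.

Lemma sorted_col lo hi : sorted gtn (col lo hi).
Proof. by rewrite /col rev_sorted; exact: iota_ltn_sorted. Qed.

Lemma mem_col lo hi x : (x \in col lo hi) = (lo <= x < hi).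
Proof. by rewrite /col mem_rev mem_iota; lia. Qed.

(* Up to the reversal i |-> n - 1 - i of letters (see [cmr_letter_val]),
   [col_but n m] is the co-mirror of a letter. *)
Definition col_but n m := col m.+1 n ++ col 0 m.
Definition col_but2 n x y := col y.+1 n ++ col x.+1 y ++ col 0 x.

Lemma col_but_filter n m : m < n -> [seq j <- col 0 n | j != m] = col_but n m.
Proof.
move=> mn; rewrite (@col_split 0 m.+1) ?mn // col_cons // filter_cat /= eqxx.
by congr (_ ++ _); apply/all_filterP/allP => j; rewrite mem_col /=; lia.
Qed.

Lemma sorted_col_but n m : m < n -> sorted gtn (col_but n m).
Proof. by move=> mn; rewrite -col_but_filter //; exact/(sorted_filter gtn_trans)/sorted_col. Qed.

Ltac solve_mem_col :=
  apply/allP => j; rewrite /col_but /col_but2 ?mem_cat ?mem_col ?inE => j_in;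
  rewrite /col_but /col_but2 ?mem_cat ?mem_col ?inE; lia.

Lemma col_but_shift_letter n m : m.+1 < n ->
  m :: col_but n m ≡ rcons (col_but n m.+1) m.+1.
Proof.
move=> mn; rewrite /col_but (@col_split m.+1 m.+2) ?leqnSn ?mn //.
rewrite col1 col_cons // -catA /= rcons_cat.
have colU : sorted gtn (rcons (col m.+2 n) m.+1).
  by rewrite -cats1 -col1 -col_split ?leqnSn ?mn ?sorted_col.
apply: plactic_trans (column_slide_left _ colU (leqnSn m)) _.
by apply/plactic_catl/column_slide_right; rewrite // -col_cons ?sorted_col.
Qed.

Lemma col_col_but_shift n b c : b <= c -> c < n ->
  col b c ++ col_but n b ≡ col_but n c ++ col b.+1 c.+1.
Proof.
elim: c => [|c IH] bc cn.
  by move: bc; rewrite leqn0 => /eqP->; rewrite !col_nil cats0; exact: plactic_refl.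
case: (ltngtP b c.+1) bc => // [|-> _]; last first.
  by rewrite !col_nil cats0; exact: plactic_refl.
rewrite ltnS => bc _; rewrite [col b c.+1]col_cons //.
apply: plactic_trans (plactic_catl [:: c] (IH bc (ltnW cn))) _ => /=.
by rewrite [col b.+1 c.+2]col_cons // -cat_rcons; exact: plactic_catr (col_but_shift_letter cn).
Qed.

Lemma col_but_pair n x y : x < y -> y < n ->
  col_but n x ++ col_but n y ≡ col 0 n ++ col_but2 n x y.
Proof.
move=> xy yn; have xn := ltn_trans xy yn.
pose W := col y.+1 n ++ col x.+1 y.
have col_x : sorted gtn (x :: col 0 x) by rewrite -col_cons ?sorted_col.
have -> : col_but n y = W ++ x :: col 0 x.
  by rewrite /col_but (@col_split 0 x.+1 y) ?col_cons // catA.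
have -> : col_but2 n x y = W ++ col 0 x by rewrite /col_but2 catA.
apply: plactic_trans (_ : _ ≡ W ++ col_but n x ++ x :: col 0 x) _.
  by apply/plactic_sym/(column_commute_cat _ (sorted_col_but xn)); solve_mem_col.
apply: plactic_trans (_ : _ ≡ W ++ col 0 n ++ col 0 x) _.
  rewrite /col_but (@col_split 0 x.+1 n) ?col_cons //.
  apply: plactic_catl; rewrite -!catA; apply: plactic_catl.
  by apply: (column_commute col_x); solve_mem_col.
by apply: (column_commute_cat _ (sorted_col 0 n)); solve_mem_col.
Qed.

Lemma col_but_pass n m k X Y : m <= k -> k < n ->
  all (mem (col k.+1 n)) X -> all (mem (col 0 m)) Y ->
  X ++ col m k ++ Y ++ col_but n m ≡ col_but n k ++ X ++ col m.+1 k.+1 ++ Y.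
Proof.
move=> mk kn Xk Ym; have mn := leq_ltn_trans mk kn.
have Yc : all (mem (col_but n m)) Y.
  by apply/allP => j /(allP Ym); rewrite /col_but !inE mem_cat !mem_col; lia.
have Xc : all (mem (col_but n k)) X.
  by apply/allP => j /(allP Xk); rewrite /col_but !inE mem_cat !mem_col; lia.
apply: plactic_trans (_ : _ ≡ X ++ col m k ++ col_but n m ++ Y) _.
  exact/plactic_catl/plactic_catl/(column_commute (sorted_col_but mn) Yc).
apply: plactic_trans (_ : _ ≡ X ++ col_but n k ++ col m.+1 k.+1 ++ Y) _.
  by have := plactic_cat X Y (col_col_but_shift mk kn); rewrite -!catA.
exact: column_commute_cat (sorted_col_but kn) Xc.
Qed.

Lemma col_but2_col_but_max n a b c : a < b -> b <= c -> c < n ->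
  col_but2 n a c ++ col_but n b ≡ col_but n c ++ col_but2 n a b.
Proof.
move=> ab bc cn.
have := @col_but_pass n b c (col c.+1 n) (col a.+1 b ++ col 0 a) bc cn.
rewrite /col_but2 (@col_split a.+1 b c) ?ab ?bc // (@col_split b.+1 c.+1 n) ?ltnS ?bc ?cn //.
by rewrite -!catA; apply; solve_mem_col.
Qed.

Lemma col_but2_col_but_mid n a b c : a <= b -> b < c -> c < n ->
  col_but2 n b c ++ col_but n a ≡ col_but n b ++ col_but2 n a c.
Proof.
move=> ab bc cn.
have := @col_but_pass n a b (col c.+1 n ++ col b.+1 c) (col 0 a) ab (ltn_trans bc cn).
rewrite /col_but2 (@col_split 0 a b) ?ab // (@col_split a.+1 b.+1 c) ?ltnS ?ab ?bc //.
by rewrite -!catA; apply; solve_mem_col.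
Qed.

Lemma col_but_knuth1 n a b c : a < b -> b <= c -> c < n ->
  col_but n c ++ col_but n a ++ col_but n b ≡ col_but n a ++ col_but n c ++ col_but n b.
Proof.
move=> ab bc cn; have bn := leq_ltn_trans bc cn; have ac := leq_trans ab bc.
have T1 := plactic_catl (col_but n c) (col_but_pair ab bn).
have T2 : col_but n c ++ col 0 n ++ col_but2 n a b ≡ col 0 n ++ col_but n c ++ col_but2 n a b.
  by apply: (column_commute_cat _ (sorted_col 0 n)); solve_mem_col.
have T3 := plactic_catl (col 0 n) (plactic_sym (col_but2_col_but_max ab bc cn)).
have T4 := plactic_catr (col_but n b) (plactic_sym (col_but_pair ac cn)).
rewrite -(catA (col 0 n)) -(catA (col_but n a)) in T4.
exact: plactic_trans T1 (plactic_trans T2 (plactic_trans T3 T4)).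
Qed.

Lemma col_but_knuth2 n a b c : a <= b -> b < c -> c < n ->
  col_but n b ++ col_but n c ++ col_but n a ≡ col_but n b ++ col_but n a ++ col_but n c.
Proof.
move=> ab bc cn; have bn := ltn_trans bc cn; have ac := leq_ltn_trans ab bc.
have T1 := plactic_catr (col_but n a) (col_but_pair bc cn).
rewrite -(catA (col_but n b)) -(catA (col 0 n)) in T1.
have T2 := plactic_catl (col 0 n) (col_but2_col_but_mid ab bc cn).
have T3 : col 0 n ++ col_but n b ++ col_but2 n a c ≡ col_but n b ++ col 0 n ++ col_but2 n a c.
  by apply/plactic_sym/(column_commute_cat _ (sorted_col 0 n)); solve_mem_col.
have T4 := plactic_catl (col_but n b) (plactic_sym (col_but_pair ac cn)).
exact: plactic_trans T1 (plactic_trans T2 (plactic_trans T3 T4)).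
Qed.

Lemma plactic_knu_equiv n s t : s ≡ t -> all (gtn n.+1) s ->
  knu_equiv (map (@inord n) s) (map (@inord n) t).
Proof.
elim=> {s t} [s|u v l r lr|s t st IH|s t w st IHst _ IHtw] sn.
- exact: knu_refl.
- rewrite !map_cat; apply: knu_step.
  move: sn; rewrite !all_cat => /and3P[_ + _].
  by case: lr => x y z xy yz /= /and4P[xn yn zn _];
    [apply: knuth1 | apply: knuth2]; rewrite !inordK.
- by apply/knu_sym/IH; rewrite (perm_all _ (plactic_perm st)).
- by apply: knu_trans (IHst sn) (IHtw _); rewrite -(perm_all _ (plactic_perm st)).
Qed.

Lemma knu_equiv_of_plactic n (u v : seq 'I_n.+1) :
  map val u ≡ map val v -> knu_equiv u v.
Proof.
have valK w : map (@inord n) (map val w) = w.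
  by rewrite -map_comp (eq_map (@inord_val n)) map_id.
move=> uv; rewrite -[u]valK -[v]valK; apply: plactic_knu_equiv uv _.
by apply/allP => _ /mapP[i _ ->]; exact: ltn_ord.
Qed.

Lemma cmr_letter_val n (i : 'I_n) : map val (cmr_letter i) = col_but n (n - i.+1).
Proof.
have -> : cmr_letter i = [seq j <- rev (enum 'I_n) | val j != n - i.+1].
  by apply: eq_filter => j; rewrite -(inj_eq val_inj).
have i_lt : n - i.+1 < n by have := ltn_ord i; lia.
rewrite -(filter_map val (fun k => k != n - i.+1)) map_rev val_enum_ord.
by rewrite -col_but_filter // /col subn0.
Qed.

Lemma knu_equiv_cat n (a b u v : seq 'I_n) :
  knu_equiv a b -> knu_equiv (u ++ a ++ v) (u ++ b ++ v).
Proof.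
elim=> {a b} [a|u0 v0 l r lr|a b _ IH|a b c _ IHab _ IHbc].
- exact: knu_refl.
- by move: (knu_step (u ++ u0) (v0 ++ v) lr); rewrite -!catA.
- exact: knu_sym.
- exact: knu_trans IHbc.
Qed.

Lemma knu_equiv_flatten_map n m (f : 'I_n -> seq 'I_m) :
  (forall l r, knuth_rel l r -> knu_equiv (flatten (map f l)) (flatten (map f r))) ->
  forall u v, knu_equiv u v -> knu_equiv (flatten (map f u)) (flatten (map f v)).
Proof.
move=> fK u v; elim=> {u v} [u|u v l r lr|u v _ IH|u v w _ IHuv _ IHvw].
- exact: knu_refl.
- by rewrite !map_cat !flatten_cat; apply/knu_equiv_cat/fK.
- exact: knu_sym.
- exact: knu_trans IHvw.
Qed.

Lemma cmr_letter_knuth1 n (p q r : 'I_n.+1) : p <= q -> q < r ->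
  knu_equiv (cmr_letter p ++ cmr_letter r ++ cmr_letter q)
            (cmr_letter r ++ cmr_letter p ++ cmr_letter q).
Proof.
move=> pq qr; have rn := ltn_ord r; apply: knu_equiv_of_plactic.
by rewrite !map_cat !cmr_letter_val; apply: col_but_knuth1; lia.
Qed.

Lemma cmr_letter_knuth2 n (p q r : 'I_n.+1) : p < q -> q <= r ->
  knu_equiv (cmr_letter q ++ cmr_letter p ++ cmr_letter r)
            (cmr_letter q ++ cmr_letter r ++ cmr_letter p).
Proof.
move=> pq qr; have rn := ltn_ord r; apply: knu_equiv_of_plactic.
by rewrite !map_cat !cmr_letter_val; apply: col_but_knuth2; lia.
Qed.

Theorem mainTheorem14 (n : nat) (hn : 1 <= n) :
  (forall p q r : 'I_n, p <= q -> q < r ->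
     knu_equiv (cmr_letter p ++ cmr_letter r ++ cmr_letter q)
               (cmr_letter r ++ cmr_letter p ++ cmr_letter q)) /\
  (forall p q r : 'I_n, p < q -> q <= r ->
     knu_equiv (cmr_letter q ++ cmr_letter p ++ cmr_letter r)
               (cmr_letter q ++ cmr_letter r ++ cmr_letter p)) /\
  (forall u v : seq 'I_n, knu_equiv u v -> knu_equiv (cmr u) (cmr v)).
Proof.
case: n hn => // n _.
split; [exact: cmr_letter_knuth1 | split; first exact: cmr_letter_knuth2].
apply: knu_equiv_flatten_map => _ _ [x y z xy yz|x y z xy yz] /=; rewrite !cats0.
- exact: cmr_letter_knuth1.
- exact: cmr_letter_knuth2.
Qed.
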